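(* Let $G$ be a group with a finite generating set $S$, equipped with the word metric $d_S$, and suppose $G$ acts transitively by isometries on a metric space $M$. Fix a basepoint $x_0 \in M$. Suppose that $M$ has asymptotic property C and that there is an integer $n \ge 0$ such that for every $R > 0$, the quasi-stabilizer $W_R(x_0)$ (with the metric restricted from $d_S$) has asymptotic dimension at most $n$. Then $G$ (with the metric $d_S$) has asymptotic property C.
   Context: The word metric on $G$ with respect to the finite generating set $S$ is $d_S(g,h) = $ the length of a shortest word in $S \cup S^{-1}$ representing $g^{-1}h$; it is left-invariant. A family $\mathcal{F}$ of subsets of a metric space $X$ is uniformly bounded if there is $R>0$ with $\mathrm{diam}(F) < R$ for all $F \in \mathcal{F}$; for $r>0$, $\mathcal{F}$ is $r$-disjoint if $d(F_1,F_2) > r$ for all distinct $F_1, F_2 \in \mathcal{F}$. A metric space $X$ has asymptotic dimension at most $n$ if for every $r>0$ there exist $n+1$ uniformly bounded, $r$-disjoint families $\mathcal{F}_0,\dots,\mathcal{F}_n$ of subsets of $X$ whose union covers $X$. A metric space $X$ has asymptotic property C if for every sequence of real numbers $0<r_0<r_1<\cdots$ there exist $m \in \mathbb{N}$ and uniformly bounded families $\mathcal{F}_0,\dots,\mathcal{F}_m$ of subsets of $X$ such that each $\mathcal{F}_i$ is $r_i$-disjoint and $\bigcup_{i=0}^m \mathcal{F}_i$ covers $X$. For a group $G$ acting by isometries on $M$, $x \in M$ and $R>0$, the $R$-quasi-stabilizer of $x$ is $W_R(x) = \{ g \in G \mid d_M(x, gx) \le R\}$. *)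

From Stdlib Require Import Reals List.
Open Scope R_scope.

Section MetricNotions.
Context {X : Type} (d : X -> X -> R).

Definition is_metric : Prop :=
  (forall x y, 0 <= d x y) /\
  (forall x y, d x y = 0 <-> x = y) /\
  (forall x y, d x y = d y x) /\
  (forall x y z, d x z <= d x y + d y z).

Definition family := (X -> Prop) -> Prop.

Definition diam_lt (A : X -> Prop) (Rb : R) : Prop :=
  exists R', R' < Rb /\ forall x y, A x -> A y -> d x y <= R'.

Definition uniformly_bounded (F : family) : Prop :=
  exists Rb, 0 < Rb /\ forall A, F A -> diam_lt A Rb.

Definition set_dist_gt (A B : X -> Prop) (r : R) : Prop :=
  exists r', r < r' /\ forall x y, A x -> B y -> r' <= d x y.

Definition r_disjoint (r : R) (F : family) : Prop :=
  forall A B, F A -> F B -> A <> B -> set_dist_gt A B r.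

Definition covers_upto (m : nat) (F : nat -> family) : Prop :=
  forall x, exists i A, (i <= m)%nat /\ F i A /\ A x.

Definition asdim_le (n : nat) : Prop :=
  forall r, 0 < r ->
    exists F : nat -> family,
      (forall i, (i <= n)%nat -> uniformly_bounded (F i) /\ r_disjoint r (F i)) /\
      covers_upto n F.

Definition asymptotic_property_C : Prop :=
  forall r : nat -> R, 0 < r 0%nat -> (forall i, r i < r (S i)) ->
    exists (m : nat) (F : nat -> family),
      (forall i, (i <= m)%nat -> uniformly_bounded (F i) /\ r_disjoint (r i) (F i)) /\
      covers_upto m F.

End MetricNotions.

Section GroupNotions.
Context {G : Type} (mul : G -> G -> G) (inv : G -> G) (e : G).

Definition is_group : Prop :=
  (forall a b c, mul a (mul b c) = mul (mul a b) c) /\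
  (forall a, mul e a = a) /\ (forall a, mul a e = a) /\
  (forall a, mul (inv a) a = e) /\ (forall a, mul a (inv a) = e).

(* a letter (s, false) stands for s, (s, true) for s^{-1} *)
Definition letter_val (l : G * bool) : G :=
  if snd l then inv (fst l) else fst l.

Definition word_in (S : list G) (w : list (G * bool)) : Prop :=
  forall l, In l w -> In (fst l) S.

Definition word_prod (w : list (G * bool)) : G :=
  fold_right (fun l acc => mul (letter_val l) acc) e w.

Definition generates (S : list G) : Prop :=
  forall g, exists w, word_in S w /\ word_prod w = g.

Definition is_word_metric (S : list G) (dS : G -> G -> R) : Prop :=
  forall g h,
    (exists w, word_in S w /\ word_prod w = mul (inv g) h /\ dS g h = INR (length w)) /\
    (forall w, word_in S w -> word_prod w = mul (inv g) h -> dS g h <= INR (length w)).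

Context {M : Type} (act : G -> M -> M) (dM : M -> M -> R).

Definition is_isometric_action : Prop :=
  (forall x, act e x = x) /\
  (forall g h x, act (mul g h) x = act g (act h x)) /\
  (forall g x y, dM (act g x) (act g y) = dM x y).

Definition transitive_action : Prop := forall x y, exists g, act g x = y.

Definition quasi_stab (Rr : R) (x : M) (g : G) : Prop := dM x (act g x) <= Rr.

End GroupNotions.

Definition restrict_metric {X : Type} (P : X -> Prop) (d : X -> X -> R)
  : {x | P x} -> {x | P x} -> R :=
  fun a b => d (proj1_sig a) (proj1_sig b).

(** The orbit map [g |-> g x0] is Lipschitz for the word metric, and by left
    invariance the preimage of any set of diameter < D containing [g x0] is a
    left translate by [g] of a subset of [W_D(x0)].  Given scales
    [r_0 < r_1 < ...], property C of [M] at the scales [L r_((n+1)j+n)]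
    yields families [FY_0, ..., FY_m] of sets of diameter < D.  Covering
    [W_D(x0)] by [n+1] families that are [r_((n+1)m+n)]-disjoint and
    translating them covers the preimage of each [U] in [FY_j] by [n+1]
    families; family number [(n+1)j+k] of [G] gathers the [k]-th pieces over
    all [U] in [FY_j].  Pieces lying over the same [U] are separated inside
    [W_D(x0)]; pieces over distinct [U] are separated because [FY_j] is
    [L r_((n+1)j+n)]-disjoint and the orbit map is [L]-Lipschitz. *)

From Stdlib Require Import Reals List Lra Lia Classical ClassicalEpsilon.
Open Scope R_scope.

Lemma increasing_lt (r : nat -> R) :
  (forall i, r i < r (S i)) -> forall a b, (a < b)%nat -> r a < r b.
Proof. intros Hr a b Hab; induction Hab; [apply Hr|]; specialize (Hr m); lra. Qed.

Lemma increasing_le (r : nat -> R) :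
  (forall i, r i < r (S i)) -> forall a b, (a <= b)%nat -> r a <= r b.
Proof.
  intros Hr a b Hab; destruct (Nat.eq_dec a b) as [->|]; [lra|].
  left; apply increasing_lt; auto; lia.
Qed.

Lemma increasing_pos (r : nat -> R) :
  0 < r 0%nat -> (forall i, r i < r (S i)) -> forall i, 0 < r i.
Proof.
  intros H0 Hr i; apply Rlt_le_trans with (r 0%nat); auto.
  apply increasing_le; auto; lia.
Qed.

Lemma div_mod_S_le n i m :
  (i <= S n * m + n)%nat -> (i / S n <= m /\ i mod S n <= n)%nat.
Proof.
  intros Hi; pose proof (Nat.mod_upper_bound i (S n) ltac:(lia)); split; [|lia].
  apply Nat.lt_succ_r, Nat.Div0.div_lt_upper_bound; nia.
Qed.

Lemma le_div_mod_S n i : (i <= S n * (i / S n) + n)%nat.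
Proof.
  pose proof (Nat.div_mod i (S n) ltac:(lia)).
  pose proof (Nat.mod_upper_bound i (S n) ltac:(lia)); nia.
Qed.

Lemma div_mod_S_pair n j k :
  (k <= n)%nat -> ((S n * j + k) / S n = j /\ (S n * j + k) mod S n = k)%nat.
Proof.
  intros Hk; split; symmetry;
    [apply Nat.div_unique with k | apply Nat.mod_unique with j]; lia.
Qed.

Section SetDistances.
Context {X : Type} (d : X -> X -> R).

Lemma diam_lt_sub (A B : X -> Prop) b :
  (forall x, A x -> B x) -> diam_lt d B b -> diam_lt d A b.
Proof. intros HAB (b' & Hb' & HB); exists b'; auto. Qed.

Lemma diam_lt_le (A : X -> Prop) b b' : b <= b' -> diam_lt d A b -> diam_lt d A b'.
Proof. intros Hbb (b0 & Hb0 & HA); exists b0; split; auto; lra. Qed.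

Lemma set_dist_gt_sub (A' B' A B : X -> Prop) r :
  (forall x, A x -> A' x) -> (forall y, B y -> B' y) ->
  set_dist_gt d A' B' r -> set_dist_gt d A B r.
Proof. intros HA HB (r' & Hr' & Hd); exists r'; auto. Qed.

Lemma r_disjoint_le r r' (F : (X -> Prop) -> Prop) : r <= r' -> r_disjoint d r' F -> r_disjoint d r F.
Proof.
  intros Hrr HF A B HA HB Hne; destruct (HF A B HA HB Hne) as (r0 & Hr0 & Hd).
  exists r0; split; auto; lra.
Qed.

Lemma uniformly_bounded_upto m (F : nat -> (X -> Prop) -> Prop) :
  (forall i, (i <= m)%nat -> uniformly_bounded d (F i)) ->
  exists b, 0 < b /\ forall i A, (i <= m)%nat -> F i A -> diam_lt d A b.
Proof.
  induction m as [|m IH]; intros HF.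
  - destruct (HF 0%nat (le_n 0)) as (b & Hb & HFb).
    exists b; split; auto; intros i A Hi; replace i with 0%nat by lia; auto.
  - destruct IH as (b & Hb & HFb); [intros i Hi; apply HF; lia|].
    destruct (HF (S m) (le_n _)) as (b' & Hb' & HFb').
    exists (Rmax b b'); split; [apply Rlt_le_trans with b; auto; apply Rmax_l|].
    intros i A Hi HA; destruct (Nat.eq_dec i (S m)) as [->|].
    + apply diam_lt_le with b'; [apply Rmax_r | auto].
    + apply diam_lt_le with b; [apply Rmax_l | apply HFb with i; auto; lia].
Qed.

End SetDistances.

Section MapsOfMetricSpaces.
Context {X Y : Type} (dX : X -> X -> R) (dY : Y -> Y -> R).

Definition image (phi : X -> Y) (V : X -> Prop) : Y -> Prop :=
  fun y => exists p, V p /\ phi p = y.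

Lemma diam_lt_image (phi : X -> Y) V b :
  (forall p q, dY (phi p) (phi q) = dX p q) ->
  diam_lt dX V b -> diam_lt dY (image phi V) b.
Proof.
  intros Hphi (b' & Hb' & HV); exists b'; split; auto.
  intros x y (p & Hp & <-) (q & Hq & <-); rewrite Hphi; auto.
Qed.

Lemma set_dist_gt_image (phi : X -> Y) V V' r :
  (forall p q, dY (phi p) (phi q) = dX p q) ->
  set_dist_gt dX V V' r -> set_dist_gt dY (image phi V) (image phi V') r.
Proof.
  intros Hphi (r' & Hr' & Hd); exists r'; split; auto.
  intros x y (p & Hp & <-) (q & Hq & <-); rewrite Hphi; auto.
Qed.

Lemma set_dist_gt_preimage (f : X -> Y) L U U' r :
  0 < L -> (forall x y, dY (f x) (f y) <= L * dX x y) ->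
  set_dist_gt dY U U' (L * r) ->
  set_dist_gt dX (fun x => U (f x)) (fun x => U' (f x)) r.
Proof.
  intros HL Hf (r' & Hr' & Hd); exists (r' / L); split.
  - apply Rmult_lt_reg_l with L; auto.
    replace (L * (r' / L)) with r' by (field; lra); lra.
  - intros x y Hx Hy; apply Rmult_le_reg_l with L; auto.
    replace (L * (r' / L)) with r' by (field; lra).
    specialize (Hd _ _ Hx Hy); specialize (Hf x y); lra.
Qed.

End MapsOfMetricSpaces.

Section Fibration.
Context {X Y : Type} (d : X -> X -> R) (dY : Y -> Y -> R) (f : X -> Y) (n : nat).

Definition fibres_asdim_le : Prop :=
  forall D r, 0 < D -> 0 < r ->
    exists (F : (Y -> Prop) -> nat -> (X -> Prop) -> Prop) Rb, 0 < Rb /\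
      forall U, diam_lt dY U D ->
        (forall k B, (k <= n)%nat -> F U k B -> diam_lt d B Rb) /\
        (forall k, (k <= n)%nat -> r_disjoint d r (F U k)) /\
        (forall x, U (f x) -> exists k B, (k <= n)%nat /\ F U k B /\ B x).

Definition fibred_family (FY : nat -> (Y -> Prop) -> Prop)
    (F : (Y -> Prop) -> nat -> (X -> Prop) -> Prop) (i : nat) (A : X -> Prop) : Prop :=
  exists U B, FY (i / S n)%nat U /\ F U (i mod S n)%nat B /\
    A = (fun x => U (f x) /\ B x).

Variables (L : R) (FY : nat -> (Y -> Prop) -> Prop)
  (F : (Y -> Prop) -> nat -> (X -> Prop) -> Prop).
Hypotheses (L_gt0 : 0 < L) (f_lipschitz : forall x y, dY (f x) (f y) <= L * d x y).

Lemma fibred_family_bounded i Rb :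
  0 < Rb -> (forall U B, FY (i / S n)%nat U -> F U (i mod S n)%nat B -> diam_lt d B Rb) ->
  uniformly_bounded d (fibred_family FY F i).
Proof.
  intros HRb HF; exists Rb; split; auto.
  intros A (U & B & HU & HB & ->); apply diam_lt_sub with B; [tauto | exact (HF U B HU HB)].
Qed.

Lemma fibred_family_disjoint i r :
  r_disjoint dY (L * r) (FY (i / S n)%nat) ->
  (forall U, FY (i / S n)%nat U -> r_disjoint d r (F U (i mod S n)%nat)) ->
  r_disjoint d r (fibred_family FY F i).
Proof.
  intros HY HF A A' (U & B & HU & HB & ->) (U' & B' & HU' & HB' & ->) Hne.
  destruct (classic (U = U')) as [<- | HUU].
  - apply set_dist_gt_sub with (A' := B) (B' := B'); [tauto | tauto |].
    apply (HF U HU); auto; intros <-; apply Hne; reflexivity.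
  - apply set_dist_gt_sub with (A' := fun x => U (f x)) (B' := fun x => U' (f x));
      [tauto | tauto |].
    apply (set_dist_gt_preimage d dY f L); auto.
Qed.

Lemma fibred_family_covers m :
  covers_upto m FY ->
  (forall j U, (j <= m)%nat -> FY j U ->
     forall x, U (f x) -> exists k B, (k <= n)%nat /\ F U k B /\ B x) ->
  covers_upto (S n * m + n) (fibred_family FY F).
Proof.
  intros HYcov HFcov x.
  destruct (HYcov (f x)) as (j & U & Hj & HU & Ux).
  destruct (HFcov j U Hj HU x Ux) as (k & B & Hk & HB & Bx).
  exists (S n * j + k)%nat, (fun y => U (f y) /\ B y); split; [nia|]; split; auto.
  destruct (div_mod_S_pair n j k Hk) as [Hj' Hk'].
  exists U, B; rewrite Hj', Hk'; auto.
Qed.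

End Fibration.

Theorem asymptotic_property_C_of_fibration {X Y : Type}
  (d : X -> X -> R) (dY : Y -> Y -> R) (f : X -> Y) (n : nat) (L : R) :
  0 < L -> (forall x y, dY (f x) (f y) <= L * d x y) ->
  asymptotic_property_C dY -> fibres_asdim_le d dY f n -> asymptotic_property_C d.
Proof.
  intros HL Hf HY Hfib r Hr0 Hr.
  pose proof (increasing_pos r Hr0 Hr) as Hrpos.
  pose (top j := (S n * j + n)%nat).
  destruct (HY (fun j => L * r (top j))) as (m & FY & HFY & HFYcov).
  { apply Rmult_lt_0_compat; auto. }
  { intros j; apply Rmult_lt_compat_l; auto; apply increasing_lt; auto; unfold top; lia. }
  destruct (uniformly_bounded_upto dY m FY) as (D & HD & HFYD).
  { intros j Hj; apply HFY; auto. }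
  destruct (Hfib D (r (top m)) HD (Hrpos _)) as (F & Rb & HRb & HF).
  exists (top m), (fibred_family f n FY F); split.
  - intros i Hi; destruct (div_mod_S_le n i m Hi) as [Hj Hk]; split.
    + apply fibred_family_bounded with Rb; auto.
      intros U B HU; apply (HF U (HFYD _ _ Hj HU)); auto.
    + apply (fibred_family_disjoint d dY f n L); auto.
      * apply r_disjoint_le with (L * r (top (i / S n)%nat)); [|apply HFY; auto].
        apply Rmult_le_compat_l; [lra|]; apply increasing_le; auto.
        apply le_div_mod_S.
      * intros U HU; apply r_disjoint_le with (r (top m)).
        -- apply increasing_le; auto.
        -- apply (HF U (HFYD _ _ Hj HU)); auto.
  - apply fibred_family_covers; auto.
    intros j U Hj HU; apply (HF U (HFYD _ _ Hj HU)).
Qed.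

Section Group.
Context {G : Type} (mul : G -> G -> G) (inv : G -> G) (e : G).
Hypothesis group_mul_inv : is_group mul inv e.

Lemma mul_inv_cancel_left g x : mul g (mul (inv g) x) = x.
Proof.
  destruct group_mul_inv as (Hassoc & Hl & _ & _ & Hr).
  rewrite Hassoc, Hr, Hl; reflexivity.
Qed.

Lemma inv_mul_cancel_left a x y : mul (inv (mul a x)) (mul a y) = mul (inv x) y.
Proof.
  destruct group_mul_inv as (Hassoc & Hl & _ & Hil & _).
  rewrite <- (mul_inv_cancel_left x y) at 1.
  rewrite (Hassoc a x), Hassoc, Hil, Hl; reflexivity.
Qed.

Lemma word_metric_translate S dS :
  is_word_metric mul inv e S dS -> forall a x y, dS (mul a x) (mul a y) = dS x y.
Proof.
  intros Hw a x y.
  destruct (Hw (mul a x) (mul a y)) as [(w1 & Hw1 & Hp1 & Hl1) Hmin1].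
  destruct (Hw x y) as [(w2 & Hw2 & Hp2 & Hl2) Hmin2].
  rewrite inv_mul_cancel_left in Hp1, Hmin1.
  apply Rle_antisym; [rewrite Hl2 | rewrite Hl1]; auto.
Qed.

Section OrbitMap.
Context {M : Type} (dM : M -> M -> R) (act : G -> M -> M) (x0 : M).
Hypotheses (metric_dM : is_metric dM) (isometric_act : is_isometric_action mul e act dM).

Lemma orbit_dist g h : dM (act g x0) (act h x0) = dM x0 (act (mul (inv g) h) x0).
Proof.
  destruct group_mul_inv as (_ & _ & _ & Hil & _).
  destruct isometric_act as (He & Hc & Hi).
  rewrite Hc, <- (Hi (inv g) (act g x0)), <- (Hc (inv g) g), Hil, He; reflexivity.
Qed.

Lemma letter_displacement_bounded (T : list G) :
  exists K, 0 <= K /\ forall l, In (fst l) T -> dM x0 (act (letter_val inv l) x0) <= K.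
Proof.
  induction T as [|s T (K & HK & HT)].
  - exists 0; split; [lra | intros l []].
  - exists (Rmax K (Rmax (dM x0 (act s x0)) (dM x0 (act (inv s) x0)))).
    split; [apply Rle_trans with K; auto; apply Rmax_l|].
    intros [t b] [Hts | Ht]; simpl in *.
    + subst t; eapply Rle_trans; [|apply Rmax_r].
      destruct b; [apply Rmax_r | apply Rmax_l].
    + eapply Rle_trans; [|apply Rmax_l]; apply (HT (t, b)); auto.
Qed.

Lemma word_displacement_le (T : list G) K :
  (forall l, In (fst l) T -> dM x0 (act (letter_val inv l) x0) <= K) ->
  forall w, word_in T w -> dM x0 (act (word_prod mul inv e w) x0) <= K * INR (length w).
Proof.
  destruct metric_dM as (_ & Hz & _ & Htri).
  destruct isometric_act as (He & Hc & Hi).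
  intros HK; induction w as [|l w IH]; intros Hw; simpl word_prod.
  - rewrite He, (proj2 (Hz x0 x0) eq_refl); simpl; lra.
  - rewrite Hc, length_cons, S_INR.
    pose proof (Htri x0 (act (letter_val inv l) x0)
                  (act (letter_val inv l) (act (word_prod mul inv e w) x0))) as Ht.
    rewrite Hi in Ht.
    pose proof (HK l (Hw l (in_eq l w))).
    pose proof (IH (fun l' Hl' => Hw l' (in_cons l l' w Hl'))); lra.
Qed.

Lemma orbit_map_lipschitz S dS :
  is_word_metric mul inv e S dS ->
  exists L, 0 < L /\ forall g h, dM (act g x0) (act h x0) <= L * dS g h.
Proof.
  intros Hw; destruct (letter_displacement_bounded S) as (K & HK & HS).
  exists (K + 1); split; [lra|]; intros g h.
  destruct (Hw g h) as [(w & Hwin & Hp & Hl) _].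
  rewrite orbit_dist, <- Hp, Hl.
  pose proof (pos_INR (length w)).
  pose proof (word_displacement_le S K HS w Hwin); nra.
Qed.

(** The preimage of [U] is translated into [W_D(x0)] by the inverse of a
    point [base U] of [U]'s orbit part, chosen by [epsilon]. *)
Lemma orbit_fibres_asdim_le S dS n :
  is_word_metric mul inv e S dS ->
  (forall Rr, 0 < Rr -> asdim_le (restrict_metric (quasi_stab act dM Rr x0) dS) n) ->
  fibres_asdim_le dS dM (fun g => act g x0) n.
Proof.
  intros Hw HW D r HD Hr.
  destruct (HW D HD r Hr) as (VF & HVF & HVFcov).
  pose (dW := restrict_metric (quasi_stab act dM D x0) dS).
  destruct (uniformly_bounded_upto dW n VF) as (Rb & HRb & HVFb).
  { intros k Hk; apply HVF; auto. }
  pose (base U := epsilon (inhabits e) (fun g => U (act g x0))).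
  pose (translate g (p : {h | quasi_stab act dM D x0 h}) := mul g (proj1_sig p)).
  assert (Htranslate : forall g p q,
    dS (translate g p) (translate g q) = dW p q).
  { intros g p q; apply (word_metric_translate S dS Hw). }
  exists (fun U k B => exists V, VF k V /\ B = image (translate (base U)) V), Rb.
  split; [exact HRb|]; intros U HU; split; [|split].
  - intros k B Hk (V & HV & ->); apply (diam_lt_image dW); auto; apply HVFb with k; auto.
  - intros k Hk B B' (V & HV & ->) (V' & HV' & ->) Hne.
    apply (set_dist_gt_image dW); auto.
    apply (proj2 (HVF k Hk)); auto; intros <-; apply Hne; reflexivity.
  - intros x Ux.
    assert (Hbase : U (act (base U) x0)) by (apply (epsilon_spec (inhabits e)); eauto).
    assert (Hq : quasi_stab act dM D x0 (mul (inv (base U)) x)).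
    { unfold quasi_stab; rewrite <- orbit_dist.
      destruct HU as (b & Hb & HUb); specialize (HUb _ _ Hbase Ux); lra. }
    destruct (HVFcov (exist _ _ Hq)) as (k & V & Hk & HV & HVq).
    exists k, (image (translate (base U)) V); split; [exact Hk|]; split; [eauto|].
    exists (exist _ _ Hq); split; auto; apply mul_inv_cancel_left.
Qed.

End OrbitMap.
End Group.

Theorem proposition1
  (G : Type) (mul : G -> G -> G) (inv : G -> G) (e : G)
  (S : list G) (dS : G -> G -> R)
  (M : Type) (dM : M -> M -> R) (act : G -> M -> M) (x0 : M) (n : nat) :
  is_group mul inv e ->
  generates mul inv e S ->
  is_word_metric mul inv e S dS ->
  is_metric dM ->
  is_isometric_action mul e act dM ->
  transitive_action act ->
  asymptotic_property_C dM ->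
  (forall Rr, 0 < Rr ->
     asdim_le (restrict_metric (quasi_stab act dM Rr x0) dS) n) ->
  asymptotic_property_C dS.
Proof.
  intros Hg _ Hw Hm Ha _ HC HW.
  destruct (orbit_map_lipschitz mul inv e Hg dM act x0 Hm Ha S dS Hw) as (L & HL & Hlip).
  apply (asymptotic_property_C_of_fibration dS dM (fun g => act g x0) n L); auto.
  apply (orbit_fibres_asdim_le mul inv e Hg dM act x0 Ha S dS n Hw HW).
Qed.
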